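(* Let $a,b\in[0,T]$, let $F=F_{a\to b}$ and let $x^*$ be a fixed point of $F$, with all objects and constants ($f^u_{a\to b},f^c_{a\to b},\Gamma_{a,b}(L),C,r,B$) as in the context, and assume the Smooth ODE and Contraction/Fixed-Point assumptions of the context hold. Let $x\in\mathbb{R}^d$ with $\|x\|\le B$ and $\|x^*\|\le B$. Then for every integer $k\ge 0$, $$\|f^c_{a\to b}(F^{k}(x))-f^u_{a\to b}(F^{k}(x))\|\le 2C\,\Gamma_{a,b}(L)\,r^k\|x-x^*\|\le 4C\,\Gamma_{a,b}(L)\,r^kB,$$ where $F^k$ is the $k$-fold composition of $F$.
   Context: $\|\cdot\|$ is the Euclidean norm on $\mathbb{R}^d$, $T>0$. Let $\bar{\alpha}:[0,T]\to(0,1)$ be a smooth, strictly decreasing noise schedule, and set $\lambda_{t}:=\sqrt{\bar{\alpha}_t}\,\frac{d}{dt}\big(\sqrt{(1-\bar{\alpha}_t)/\bar{\alpha}_t}\big)$, $\mu_{t}:=-\sqrt{\bar{\alpha}_t}\,\frac{d}{dt}\big(1/\sqrt{\bar{\alpha}_t}\big)$. Let $\varepsilon^u,\varepsilon^c:\mathbb{R}^d\times[0,T]\to\mathbb{R}^d$ be noise predictors and $f^u_{a\to b}(x)$ (resp. $f^c_{a\to b}(x)$) the value at time $b$ of the solution of $\frac{dx_t}{dt}=\mu_t x_t+\lambda_t\varepsilon^u(x_t,t)$ (resp. with $\varepsilon^c$) with $x_a=x$. $L>0$ is a Lipschitz constant of $\varepsilon^u(\cdot,t),\varepsilon^c(\cdot,t)$,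 $\Gamma_{a,b}(L):=(|\lambda_a|L+|\mu_a|)|b-a|+1$, and $B>0$. (Smooth ODE) There is $C>1$ with $\|f^{u}_{a\to b}(x)-f^{u}_{a\to b}(y)\|\le C\Gamma_{a,b}(L)\|x-y\|$ and $\|f^{c}_{a\to b}(x)-f^{c}_{a\to b}(y)\|\le C\Gamma_{a,b}(L)\|x-y\|$ for all $x,y$. (Contraction/Fixed Point) There is $r\in(0,1)$ and an operator $F_{a\to b}:\mathbb{R}^d\to\mathbb{R}^d$ with a fixed point $x^*$, whose fixed points are exactly the $x$ with $f^c_{a\to b}(x)=f^u_{a\to b}(x)$, and with $\|F_{a\to b}(x)-F_{a\to b}(y)\|\le r\|x-y\|$ for all $x,y$. *)

From HB Require Import structures.
From mathcomp Require Import all_boot all_order all_algebra.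
From mathcomp Require Import all_classical all_reals all_analysis.
Set Implicit Arguments. Unset Strict Implicit. Unset Printing Implicit Defensive.
Import Order.TTheory GRing.Theory Num.Theory.
Import numFieldNormedType.Exports.
Local Open Scope ring_scope.
Local Open Scope classical_set_scope.

Definition enorm {R : realType} {d : nat} (v : 'rV[R]_d) : R :=
  Num.sqrt (\sum_(i < d) (v ord0 i) ^+ 2).

Definition lam {R : realType} (abar : R -> R) (t : R) : R :=
  Num.sqrt (abar t) * derive1 (fun s => Num.sqrt ((1 - abar s) / abar s)) t.

Definition mu {R : realType} (abar : R -> R) (t : R) : R :=
  - (Num.sqrt (abar t) * derive1 (fun s => 1 / Num.sqrt (abar s)) t).

Definition Gamma {R : realType} (abar : R -> R) (a b L : R) : R :=
  (`|lam abar a| * L + `|mu abar a|) * `|b - a| + 1.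

Definition noise_schedule {R : realType} (T : R) (abar : R -> R) : Prop :=
  (forall n (t : R), derivable (derive1n n abar) t 1) /\
  (forall t, t \in `[0, T] -> 0 < abar t < 1) /\
  (forall s t, s \in `[0, T] -> t \in `[0, T] -> s < t -> abar t < abar s).

Definition is_flow_map {R : realType} {d : nat} (abar : R -> R)
  (eps : 'rV[R]_d -> R -> 'rV[R]_d) (a b : R) (f : 'rV[R]_d -> 'rV[R]_d) : Prop :=
  forall x : 'rV[R]_d, exists phi : R -> 'rV[R]_d,
    phi a = x /\ phi b = f x /\
    forall t, t \in `[Order.min a b, Order.max a b] ->
      is_derive t (1 : R) phi (mu abar t *: phi t + lam abar t *: eps (phi t) t).

From HB Require Import structures.
From mathcomp Require Import all_boot all_order all_algebra.
From mathcomp Require Import all_classical all_reals all_analysis.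
From mathcomp Require Import ring lra.
Import Order.TTheory GRing.Theory Num.Theory.
Import numFieldNormedType.Exports.
Local Open Scope ring_scope.
Local Open Scope classical_set_scope.

(* The iterates [F^k x] approach the fixed point [xstar] geometrically, at
   rate [r^k].  Since [fc] and [fu] agree at [xstar], the gap [fc y - fu y]
   splits as [(fc y - fc xstar) + (fu xstar - fu y)], and each term is at
   most [C Gamma |y - xstar|] by the Lipschitz bounds on the flow maps.
   Taking [y = F^k x] gives the first inequality, and
   [|x - xstar| <= 2 B] the second.  The ODE data (noise schedule, noise
   predictors, flow-map property) enter only through these Lipschitz bounds. *)

Lemma cauchy_schwarz_sum (R : realDomainType) (I : finType) (u v : I -> R) :
  (\sum_i u i * v i) ^+ 2 <= (\sum_i u i ^+ 2) * (\sum_i v i ^+ 2).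
Proof.
(* Lagrange's identity: twice the difference of the two sides is a sum of squares. *)
have lagrange : \sum_i \sum_j (u i * v j - u j * v i) ^+ 2 =
    2 * ((\sum_i u i ^+ 2) * (\sum_j v j ^+ 2) - (\sum_i u i * v i) ^+ 2).
  have expand : \sum_i \sum_j (u i * v j - u j * v i) ^+ 2 =
      \sum_i \sum_j u i ^+ 2 * v j ^+ 2 + \sum_i \sum_j u j ^+ 2 * v i ^+ 2
      - 2 * \sum_i \sum_j (u i * v i) * (u j * v j).
    rewrite -big_split mulr_sumr -sumrB /=.
    apply: eq_bigr => i _; rewrite -big_split mulr_sumr -sumrB /=.
    by apply: eq_bigr => j _; ring.
  by rewrite expand [X in _ + X - _]exchange_big -!big_distrlr /=; ring.
have : 0 <= \sum_i \sum_j (u i * v j - u j * v i) ^+ 2.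
  by apply: sumr_ge0 => i _; apply: sumr_ge0 => j _; exact: sqr_ge0.
by rewrite lagrange pmulr_rge0 // subr_ge0.
Qed.

Section EuclideanNorm.
Context {R : realType} {d : nat}.
Implicit Types u v : 'rV[R]_d.

Lemma enormN v : enorm (- v) = enorm v.
Proof. by rewrite /enorm; congr Num.sqrt; apply: eq_bigr => i _; rewrite mxE sqrrN. Qed.

Lemma enormD u v : enorm (u + v) <= enorm u + enorm v.
Proof.
rewrite /enorm.
set A := \sum_i u ord0 i ^+ 2; set B := \sum_i v ord0 i ^+ 2.
set P := \sum_i u ord0 i * v ord0 i.
have A_ge0 : 0 <= A by apply: sumr_ge0 => i _; exact: sqr_ge0.
have B_ge0 : 0 <= B by apply: sumr_ge0 => i _; exact: sqr_ge0.
have -> : \sum_i (u + v) ord0 i ^+ 2 = A + B + 2 * P.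
  rewrite mulr_sumr -!big_split /=.
  by apply: eq_bigr => i _; rewrite mxE; ring.
have P_le : P <= Num.sqrt A * Num.sqrt B.
  rewrite -sqrtrM // (le_trans (ler_norm P)) // -sqrtr_sqr.
  exact/ler_wsqrtr/cauchy_schwarz_sum.
rewrite -[_ + Num.sqrt B]ger0_norm ?addr_ge0 ?sqrtr_ge0 // -sqrtr_sqr.
by apply: ler_wsqrtr; rewrite sqrrD !sqr_sqrtr //; lra.
Qed.

Lemma lipschitz_gap_le {f g : 'rV[R]_d -> 'rV[R]_d} {K : R} {p : 'rV[R]_d} :
  (forall u v, enorm (f u - f v) <= K * enorm (u - v)) ->
  (forall u v, enorm (g u - g v) <= K * enorm (u - v)) ->
  f p = g p -> forall y, enorm (f y - g y) <= 2 * K * enorm (y - p).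
Proof.
move=> f_lip g_lip fg_p y.
have -> : f y - g y = (f y - f p) + (g p - g y) by rewrite fg_p addrA subrK.
apply: (le_trans (enormD _ _)).
have := g_lip y p; rewrite -enormN opprB => g_le.
have := f_lip y p; lra.
Qed.

End EuclideanNorm.

Lemma iter_contraction {R : numDomainType} {T : Type} (dist : T -> T -> R)
    {F : T -> T} {r : R} {p : T} :
  0 <= r -> (forall y z, dist (F y) (F z) <= r * dist y z) -> F p = p ->
  forall x k, dist (iter k F x) p <= r ^+ k * dist x p.
Proof.
move=> r_ge0 F_contr Fp x; elim=> [|k IHk]; first by rewrite mul1r.
rewrite iterS -{1}Fp exprS -mulrA (le_trans (F_contr _ _)) //.
exact: ler_wpM2l.
Qed.

Lemma Gamma_ge1 {R : realType} (abar : R -> R) (a b L : R) :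
  0 <= L -> 1 <= Gamma abar a b L.
Proof.
move=> L_ge0; rewrite /Gamma lerDr.
by rewrite mulr_ge0 ?addr_ge0 ?mulr_ge0.
Qed.

Theorem lemma1 (R : realType) (d : nat) (T : R) (abar : R -> R)
  (epsu epsc : 'rV[R]_d -> R -> 'rV[R]_d) (L C r B a b : R)
  (fu fc F : 'rV[R]_d -> 'rV[R]_d) (xstar x : 'rV[R]_d) :
  0 < T -> noise_schedule T abar ->
  0 < L ->
  (forall t y z, enorm (epsu y t - epsu z t) <= L * enorm (y - z)) ->
  (forall t y z, enorm (epsc y t - epsc z t) <= L * enorm (y - z)) ->
  0 < B ->
  a \in `[0, T] -> b \in `[0, T] ->
  is_flow_map abar epsu a b fu -> is_flow_map abar epsc a b fc ->
  (* Smooth ODE assumption *)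
  1 < C ->
  (forall y z, enorm (fu y - fu z) <= C * Gamma abar a b L * enorm (y - z)) ->
  (forall y z, enorm (fc y - fc z) <= C * Gamma abar a b L * enorm (y - z)) ->
  (* Contraction / fixed point assumption *)
  0 < r < 1 ->
  (forall y, F y = y <-> fc y = fu y) ->
  (forall y z, enorm (F y - F z) <= r * enorm (y - z)) ->
  F xstar = xstar ->
  enorm x <= B -> enorm xstar <= B ->
  forall k : nat,
    enorm (fc (iter k F x) - fu (iter k F x))
      <= 2 * C * Gamma abar a b L * r ^+ k * enorm (x - xstar)
    /\ 2 * C * Gamma abar a b L * r ^+ k * enorm (x - xstar)
      <= 4 * C * Gamma abar a b L * r ^+ k * B.
Proof.
move=> _ _ L_gt0 _ _ _ _ _ _ _ C_gt1 fu_lip fc_lip /andP[r_gt0 _] F_fixE F_contr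
  F_xstar x_le xstar_le k.
have G_ge1 := Gamma_ge1 abar a b L (ltW L_gt0).
set G := Gamma abar a b L in G_ge1 fu_lip fc_lip *.
have iter_le : enorm (iter k F x - xstar) <= r ^+ k * enorm (x - xstar).
  exact: (iter_contraction (fun y z => enorm (y - z)) (ltW r_gt0) F_contr F_xstar x k).
have gap_le := lipschitz_gap_le fc_lip fu_lip (proj1 (F_fixE xstar) F_xstar) (iter k F x).
have dist_le : enorm (x - xstar) <= 2 * B.
  by rewrite (le_trans (enormD _ _)) // enormN; lra.
have coef_ge0 : 0 <= 2 * C * G * r ^+ k.
  by rewrite !mulr_ge0 ?exprn_ge0 //; lra.
split.
  rewrite (le_trans gap_le) // -!mulrA !ler_wpM2l //; lra.
rewrite [4 * _ * _ * _ * B](_ : _ = 2 * C * G * r ^+ k * (2 * B)); last by ring.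
exact: ler_wpM2l.
Qed.
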